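(* Let $U\subseteq\mathbb{C}$ be open and $h:U\to\mathbb{C}$ holomorphic without zeros on $U$, $h=h_1+ih_2$ with $h_1,h_2$ real-valued functions of $(z_1,z_2)$, $z=z_1+iz_2$. Equip $U\subseteq\mathbb{R}^2$ with the Riemannian metric $g_{11}=g_{22}=1/(h_1^2+h_2^2)$, $g_{12}=g_{21}=0$ in coordinates $(z_1,z_2)$, and let $\nabla$ be its Levi-Civita connection. Let $\mathbf{h}=(h_1,h_2)^T$ and define the vector fields $\mathtt{h}=h_1\partial_1+h_2\partial_2$ and $\bar{\mathtt{h}}=-h_2\partial_1+h_1\partial_2$. Let $\mathtt{X}=X^1\partial_1+X^2\partial_2$ be a vector field such that $X^1+iX^2$ is a holomorphic function of $z=z_1+iz_2$ on $U$, and write $\mathbf{X}=(X^1,X^2)^T$. Let $J_{\mathbf{X}},J_{\mathbf{h}}\in\mathbb{R}^{2\times2}$ be the Jacobian matrices of $\mathbf{X}$ and $\mathbf{h}$ with respect to $(z_1,z_2)$, and $E=\begin{pmatrix}0&-1\\1&0\end{pmatrix}$. Then $$\nabla_{\mathtt{h}}\mathtt{X}=\sum_{k=1}^2\big(J_{\mathbf{X}}\mathbf{h}-J_{\mathbf{h}}\mathbf{X}\big)^k\partial_k,\qquad \nabla_{\bar{\mathtt{h}}}\mathtt{X}=\sum_{k=1}^2\big(E(J_{\mathbf{X}}\mathbf{h}-J_{\mathbf{h}}\mathbf{X})\big)^k\partial_k,$$ where $(\cdot)^k$ denotes the $k$-th component of a vector in $\mathbb{R}^2$.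
   Context: $\partial_k$ denotes the coordinate tangent vector in direction $z_k$. A vector field $X^1\partial_1+X^2\partial_2$ with $X^1+iX^2$ holomorphic is called a holomorphic splitting (of the holomorphic function $X^1+iX^2$); $\mathtt{h}$ and $\bar{\mathtt{h}}$ are the holomorphic splittings of $h$ and $ih$ respectively. *)

From Stdlib Require Import Reals.
From Coquelicot Require Import Coquelicot.
Open Scope R_scope.

(* Coordinates (z1,z2) on R^2 = C; indices k = 0,1 stand for 1,2. *)

Definition holomorphic_on (U : C -> Prop) (f : C -> C) : Prop :=
  forall z : C, U z -> @ex_derive C_AbsRing C_NormedModule f z.

Definition re_part (f : C -> C) (z1 z2 : R) : R := fst (f (z1, z2)).
Definition im_part (f : C -> C) (z1 z2 : R) : R := snd (f (z1, z2)).

Definition pd (i : nat) (f : R -> R -> R) (x y : R) : R :=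
  match i with
  | O => Derive (fun t => f t y) x
  | _ => Derive (fun t => f x t) y
  end.

Definition sum2 (F : nat -> R) : R := F 0%nat + F 1%nat.

(* A vector field X = X^1 d_1 + X^2 d_2, given by components (index 0,1). *)
Definition vfield := nat -> R -> R -> R.

Definition splitting (f : C -> C) : vfield :=
  fun k => match k with O => re_part f | _ => im_part f end.

Definition metric := nat -> nat -> R -> R -> R.

Definition ginv (g : metric) (k l : nat) (x y : R) : R :=
  let det := g 0%nat 0%nat x y * g 1%nat 1%nat x y
             - g 0%nat 1%nat x y * g 1%nat 0%nat x y in
  match k, l with
  | O, O => g 1%nat 1%nat x y / det
  | O, _ => - g 0%nat 1%nat x y / det
  | _, O => - g 1%nat 0%nat x y / det
  | _, _ => g 0%nat 0%nat x y / det
  end.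

Definition christoffel (g : metric) (k i j : nat) (x y : R) : R :=
  / 2 * sum2 (fun l => ginv g k l x y *
     (pd i (g j l) x y + pd j (g i l) x y - pd l (g i j) x y)).

Definition levi_civita (g : metric) (Y X : vfield) (k : nat) (x y : R) : R :=
  sum2 (fun i => Y i x y * pd i (X k) x y)
  + sum2 (fun i => sum2 (fun j => christoffel g k i j x y * Y i x y * X j x y)).

Definition metric_of (h : C -> C) : metric :=
  fun i j x y =>
    if Nat.eqb i j then / (re_part h x y ^ 2 + im_part h x y ^ 2) else 0.

Definition jac_apply (A v : vfield) (k : nat) (x y : R) : R :=
  sum2 (fun i => pd i (A k) x y * v i x y).

Definition E_apply (w : nat -> R) (k : nat) : R :=
  match k with O => - w 1%nat | _ => w 0%nat end.

(* The metric is conformal, g = rho * delta with rho = 1 / |h|^2, so its Christoffel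
   symbols are (delta_jk d_i rho + delta_ik d_j rho - delta_ij d_k rho) / (2 rho).
   By the Cauchy-Riemann equations every first partial derivative of h, X and rho at a
   point is expressed through the values of h, X, h' and X' there, and after this
   substitution both identities become rational identities in those values. *)

From Stdlib Require Import Reals Lra Lia.
From Coquelicot Require Import Coquelicot.
Open Scope R_scope.

Lemma line_remainder_small (f : C -> C) (z l v : C) (t0 : R) :
  @is_derive C_AbsRing C_NormedModule f z l ->
  forall eps : posreal, locally t0 (fun t =>
    Cmod (f (z + RtoC (t - t0) * v) - f z - RtoC (t - t0) * v * l)%C <= eps * Rabs (t - t0)).
Proof.
  intros [_ Hf] eps.
  assert (Hv : 0 < Cmod v + 1) by (pose proof (Cmod_ge_0 v); lra).
  assert (Heps : 0 < eps / (Cmod v + 1)) by (apply Rdiv_lt_0_compat; [apply cond_pos | exact Hv]).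
  destruct (Hf z (fun P HP => HP) (mkposreal _ Heps)) as [d Hd]; simpl in Hd.
  assert (Hd' : 0 < d / (Cmod v + 1)) by (apply Rdiv_lt_0_compat; [apply cond_pos | exact Hv]).
  exists (mkposreal _ Hd'). intros t Ht.
  change (Rabs (t - t0) < d / (Cmod v + 1)) in Ht. apply Rlt_div_r in Ht; [|exact Hv].
  set (w := (z + RtoC (t - t0) * v)%C).
  assert (Hwz : (w - z)%C = (RtoC (t - t0) * v)%C) by (unfold w; ring).
  assert (Hnorm : Cmod (w - z)%C = Rabs (t - t0) * Cmod v)
    by (rewrite Hwz, Cmod_mult, Cmod_R; reflexivity).
  pose proof (Rabs_pos (t - t0)).
  assert (Hball : Cmod (w - z)%C < d) by (rewrite Hnorm; nra).
  specialize (Hd w Hball).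
  change (Cmod (f w - f z - (w - z) * l)%C <= eps / (Cmod v + 1) * Cmod (w - z)%C) in Hd.
  rewrite Hwz, Cmod_mult, Cmod_R in Hd. eapply Rle_trans; [exact Hd|].
  assert (Hq : pos eps = eps / (Cmod v + 1) * (Cmod v + 1)) by (field; lra).
  rewrite Hq at 2. nra.
Qed.

Section RealLinearFunctional.

Variable p : C -> R.
Hypothesis p_minus : forall a b : C, p (a - b)%C = p a - p b.
Hypothesis p_scal : forall (s : R) (w : C), p (RtoC s * w)%C = s * p w.
Hypothesis p_bound : forall c : C, Rabs (p c) <= Cmod c.

Lemma is_derive_along_line (f : C -> C) (c : R -> C) (l v : C) (t0 : R) :
  (forall t, c t = c t0 + RtoC (t - t0) * v)%C ->
  @is_derive C_AbsRing C_NormedModule f (c t0) l ->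
  is_derive (fun t => p (f (c t))) t0 (p (v * l)%C).
Proof.
  intros Hc Hf. split; [apply is_linear_scal_l|].
  intros x Hx. apply (@is_filter_lim_locally_unique R_AbsRing R_NormedModule) in Hx.
  subst x. intros eps.
  eapply filter_imp; [|exact (line_remainder_small f (c t0) l v t0 Hf eps)]. intros t Ht.
  change (Rabs (p (f (c t)) - p (f (c t0)) - (t - t0) * p (v * l)%C) <= eps * Rabs (t - t0)).
  rewrite (Hc t).
  replace (p (f (c t0 + RtoC (t - t0) * v)%C) - p (f (c t0)) - (t - t0) * p (v * l)%C)
    with (p (f (c t0 + RtoC (t - t0) * v) - f (c t0) - RtoC (t - t0) * v * l)%C)
    by (rewrite !p_minus, <- Cmult_assoc, p_scal; ring).
  eapply Rle_trans; [apply p_bound | exact Ht].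
Qed.

End RealLinearFunctional.

Lemma is_derive_partials_holomorphic (f : C -> C) (x y : R) (l : C) :
  @is_derive C_AbsRing C_NormedModule f (x, y) l ->
  is_derive (fun t => re_part f t y) x (fst l) /\
  is_derive (fun t => im_part f t y) x (snd l) /\
  is_derive (fun t => re_part f x t) y (- snd l) /\
  is_derive (fun t => im_part f x t) y (fst l).
Proof.
  intros Hf.
  assert (fst_along := is_derive_along_line fst
    (fun a b => eq_refl) (fun s w => ltac:(simpl; ring))
    (fun c => Rle_trans _ _ _ (Rmax_l _ _) (Rmax_Cmod c)) f).
  assert (snd_along := is_derive_along_line snd
    (fun a b => eq_refl) (fun s w => ltac:(simpl; ring))
    (fun c => Rle_trans _ _ _ (Rmax_r _ _) (Rmax_Cmod c)) f).
  assert (line_x : forall t, (t, y) = ((x, y) + RtoC (t - x) * 1)%C)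
    by (intros t; unfold Cplus, Cmult, RtoC; simpl; f_equal; ring).
  assert (line_y : forall t, (x, t) = ((x, y) + RtoC (t - y) * Ci)%C)
    by (intros t; unfold Cplus, Cmult, RtoC, Ci; simpl; f_equal; ring).
  split; [|split; [|split]].
  - replace (fst l) with (fst (1 * l)%C) by (simpl; ring).
    exact (fst_along (fun t => (t, y)) l 1 x line_x Hf).
  - replace (snd l) with (snd (1 * l)%C) by (simpl; ring).
    exact (snd_along (fun t => (t, y)) l 1 x line_x Hf).
  - replace (- snd l) with (fst (Ci * l)%C) by (simpl; ring).
    exact (fst_along (fun t => (x, t)) l Ci y line_y Hf).
  - replace (fst l) with (snd (Ci * l)%C) by (simpl; ring).
    exact (snd_along (fun t => (x, t)) l Ci y line_y Hf).
Qed.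

Lemma pd_holomorphic (f : C -> C) (x y : R) (l : C) :
  @is_derive C_AbsRing C_NormedModule f (x, y) l ->
  pd 0 (re_part f) x y = fst l /\ pd 0 (im_part f) x y = snd l /\
  pd 1 (re_part f) x y = - snd l /\ pd 1 (im_part f) x y = fst l.
Proof.
  intros Hf.
  destruct (is_derive_partials_holomorphic f x y l Hf) as (Hrx & Hix & Hry & Hiy).
  unfold pd; repeat split; apply is_derive_unique; assumption.
Qed.

Lemma sqnorm_neq_0 (c : C) : c <> 0%C -> fst c ^ 2 + snd c ^ 2 <> 0.
Proof.
  intros Hc E. apply Cmod_gt_0 in Hc. unfold Cmod in Hc.
  rewrite E, sqrt_0 in Hc. lra.
Qed.

Lemma is_derive_inv_sqnorm (u v : R -> R) (x du dv : R) :
  is_derive u x du -> is_derive v x dv -> u x ^ 2 + v x ^ 2 <> 0 ->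
  is_derive (fun t => / (u t ^ 2 + v t ^ 2)) x
    (- 2 * (u x * du + v x * dv) / (u x ^ 2 + v x ^ 2) ^ 2).
Proof.
  intros Hu Hv Hn.
  replace (- 2 * (u x * du + v x * dv) / (u x ^ 2 + v x ^ 2) ^ 2)
    with (- (INR 2 * du * u x ^ 1 + INR 2 * dv * v x ^ 1) / (u x ^ 2 + v x ^ 2) ^ 2)
    by (cbn [INR]; field; exact Hn).
  apply (is_derive_inv (fun t => u t ^ 2 + v t ^ 2)); [|exact Hn].
  apply (is_derive_plus (fun t => u t ^ 2) (fun t => v t ^ 2));
    apply is_derive_pow; assumption.
Qed.

Definition kron (i j : nat) : R := if Nat.eqb i j then 1 else 0.

Definition conformal (rho : R -> R -> R) : metric :=
  fun i j x y => if Nat.eqb i j then rho x y else 0.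

Lemma pd_conformal (rho : R -> R -> R) (i j l : nat) (x y : R) :
  pd i (conformal rho j l) x y = kron j l * pd i rho x y.
Proof.
  unfold conformal, kron. destruct (Nat.eqb j l).
  - rewrite Rmult_1_l. reflexivity.
  - rewrite Rmult_0_l. destruct i; unfold pd; apply Derive_const.
Qed.

Lemma christoffel_conformal (rho : R -> R -> R) (k i j : nat) (x y : R) :
  (k < 2)%nat -> (i < 2)%nat -> (j < 2)%nat -> rho x y <> 0 ->
  christoffel (conformal rho) k i j x y =
  (kron j k * pd i rho x y + kron i k * pd j rho x y - kron i j * pd k rho x y)
  / (2 * rho x y).
Proof.
  intros Hk Hi Hj Hrho.
  unfold christoffel, sum2. rewrite !pd_conformal.
  unfold ginv, conformal.
  destruct k as [|[|k]], i as [|[|i]], j as [|[|j]]; try lia;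
    unfold kron; simpl; field; exact Hrho.
Qed.

Theorem lemma2 (U : C -> Prop) (h Xf : C -> C) :
  @open C_NormedModule U ->
  holomorphic_on U h ->
  (forall z : C, U z -> h z <> 0%C) ->
  holomorphic_on U Xf ->
  let g := metric_of h in
  let hv := splitting h in
  let hbar : vfield := fun k => match k with
                        | O => fun x y => - im_part h x y
                        | _ => re_part h end in
  let X := splitting Xf in
  let w := fun x y (k : nat) => jac_apply X hv k x y - jac_apply hv X k x y in
  forall z1 z2 : R, U (z1, z2) ->
    (forall k : nat, (k < 2)%nat ->
       levi_civita g hv X k z1 z2 = w z1 z2 k) /\
    (forall k : nat, (k < 2)%nat ->
       levi_civita g hbar X k z1 z2 = E_apply (w z1 z2) k).
Proof.
  intros _ Hh Hnz HX g hv hbar X w z1 z2 Hz.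
  destruct (Hh _ Hz) as [lh Hlh]. destruct (HX _ Hz) as [lx Hlx].
  set (rho x y := / (re_part h x y ^ 2 + im_part h x y ^ 2)).
  assert (Hn := sqnorm_neq_0 _ (Hnz _ Hz)).
  assert (Hrho : rho z1 z2 <> 0) by (apply Rinv_neq_0_compat; exact Hn).
  destruct (is_derive_partials_holomorphic h z1 z2 lh Hlh) as (Hrx & Hix & Hry & Hiy).
  assert (rho_x : pd 0 rho z1 z2 = - 2 * (re_part h z1 z2 * fst lh + im_part h z1 z2 * snd lh)
                    / (re_part h z1 z2 ^ 2 + im_part h z1 z2 ^ 2) ^ 2)
    by (exact (is_derive_unique _ _ _ (is_derive_inv_sqnorm _ _ _ _ _ Hrx Hix Hn))).
  assert (rho_y : pd 1 rho z1 z2 = - 2 * (re_part h z1 z2 * - snd lh + im_part h z1 z2 * fst lh)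
                    / (re_part h z1 z2 ^ 2 + im_part h z1 z2 ^ 2) ^ 2)
    by (exact (is_derive_unique _ _ _ (is_derive_inv_sqnorm _ _ _ _ _ Hry Hiy Hn))).
  destruct (pd_holomorphic h z1 z2 lh Hlh) as (h1x & h2x & h1y & h2y).
  destruct (pd_holomorphic Xf z1 z2 lx Hlx) as (X1x & X2x & X1y & X2y).
  change (metric_of h) with (conformal rho) in g.
  subst g hv hbar X w.
  split; intros k Hk; destruct k as [|[|k]]; try lia;
    unfold levi_civita, jac_apply, E_apply; cbv beta iota; unfold sum2;
    rewrite !christoffel_conformal by (lia || assumption);
    cbn [kron Nat.eqb splitting].
  all: rewrite ?rho_x, ?rho_y, ?h1x, ?h2x, ?h1y, ?h2y, ?X1x, ?X2x, ?X1y, ?X2y.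
  all: unfold rho; field; exact Hn.
Qed.
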